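(* Let $I$ be a non-degenerate interval, $f:I\to\mathbb{R}$ continuous and $y\in I$. (i) If $y$ is not an $\mathsf{M}$-point of $f$, then either $\overline{D}^+f(y)=+\infty$ and $\underline{D}^-f(y)=-\infty$, or $\overline{D}^-f(y)=+\infty$ and $\underline{D}^+f(y)=-\infty$. (ii) If $\underline{D}^-f(y)=-\infty$ and $\underline{D}^+_{ap}f(y)=+\infty$, then $y$ is not an $\mathsf{M}$-point of $f$.
   Context: $\overline{D}^+f(y)=\limsup_{t\to y+}\frac{f(t)-f(y)}{t-y}$, and $\underline{D}^+,\overline{D}^-,\underline{D}^-$ are the other Dini derivatives. The approximate lower right Dini derivative is $\underline{D}^+_{ap}f(y)=\sup\{t:\lim_{\delta\to0+}\delta^{-1}\lambda(\{s\in(y,y+\delta):\frac{f(s)-f(y)}{s-y}\ge t\})=1\}$ ($\lambda$ Lebesgue measure). With $\psi(x)=(x,f(x))$, $y$ is an $\mathsf{M}$-point of $f$ if there are $c\ge1$ and $\varepsilon>0$ with $|\psi(x)-\psi(y)|\le c|\psi(x)-\psi(z)|$ for all $x\in I\cap(y-\varepsilon,y)$, $z\in I\cap(y,y+\varepsilon)$. *)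

From HB Require Import structures.
From mathcomp Require Import all_boot all_order all_algebra.
From mathcomp Require Import all_classical all_reals all_analysis.
Set Implicit Arguments. Unset Strict Implicit. Unset Printing Implicit Defensive.
Import Order.TTheory GRing.Theory Num.Theory.
Import numFieldNormedType.Exports.
Local Open Scope classical_set_scope.
Local Open Scope ring_scope.

Section Dini.
Variable R : realType.
Implicit Types (I : set R) (f : R -> R) (y : R).

Definition dq f y (t : R) : R := (f t - f y) / (t - y).

Definition rnbh I y (d : R) : set R := I `&` [set t | y < t < y + d].
Definition lnbh I y (d : R) : set R := I `&` [set t | y - d < t < y].

(* Dini derivatives (relative to the domain I), as limsup/liminf in \bar R:
   limsup_{t->y+} g t = inf_{d>0} sup_{t in (y,y+d)} g t, etc.
   (sup of the empty set is -oo, inf of the empty set is +oo) *)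
Definition dini_upper_right I f y : \bar R :=
  ereal_inf [set ereal_sup [set (dq f y t)%:E | t in rnbh I y d] | d in [set d : R | 0 < d]].
Definition dini_lower_right I f y : \bar R :=
  ereal_sup [set ereal_inf [set (dq f y t)%:E | t in rnbh I y d] | d in [set d : R | 0 < d]].
Definition dini_upper_left I f y : \bar R :=
  ereal_inf [set ereal_sup [set (dq f y t)%:E | t in lnbh I y d] | d in [set d : R | 0 < d]].
Definition dini_lower_left I f y : \bar R :=
  ereal_sup [set ereal_inf [set (dq f y t)%:E | t in lnbh I y d] | d in [set d : R | 0 < d]].

Definition dini_lower_right_ap I f y : \bar R :=
  ereal_sup [set t%:E | t in
    [set t : R | (fun d : R => ((d^-1)%:E *
        (@lebesgue_measure R) [set s | rnbh I y d s /\ (t <= dq f y s)%R])%E)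
       @ 0^'+ --> 1%E]].

(* Euclidean distance in R^2 between psi(a) = (a, f a) and psi(b) = (b, f b) *)
Definition psidist f (a b : R) : R := Num.sqrt ((a - b) ^+ 2 + (f a - f b) ^+ 2).

Definition Mpoint I f y : Prop :=
  exists c : R, exists eps : R, 1 <= c /\ 0 < eps /\
    forall x z, I x -> y - eps < x < y -> I z -> y < z < y + eps ->
      psidist f x y <= c * psidist f x z.

End Dini.

From HB Require Import structures.
From mathcomp Require Import all_boot all_order all_algebra.
From mathcomp Require Import all_classical all_reals all_analysis.
From mathcomp Require Import lra.
Import Order.TTheory GRing.Theory Num.Theory.
Import numFieldNormedType.Exports.
Local Open Scope classical_set_scope.
Local Open Scope ring_scope.

(* (i) If y is not an M-point, then for every c there are x < y < z close to y
   with |psi x - psi y| > c |psi x - psi z|.  As |psi x - psi z| dominates both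
   z - x and |f x - f z|, the increments f x - f y and f z - f y must then share
   a sign and be huge compared with y - x and z - y: the difference quotients on
   the two sides of y are huge with opposite signs.  Which of the two sign
   patterns occurs is monotone in the scale, so one of them occurs at every
   scale, and the Dini derivatives follow.
   (ii) Suppose y is an M-point with constant c.  Choose x < y close to y with
   h := f x - f y > 2c (y - x).  Since the approximate lower right derivative
   exceeds some t > 4c, more than half of (y, y + 2h/t) consists of points s
   with f s - f y >= t (s - y), and one of them lies beyond y + h/t, where
   f s >= f y + h = f x.  The intermediate value theorem gives z in (y, s] with
   f z = f x, hence |psi x - psi z| = z - x < (y - x) + 2h/t, whereas
   |psi x - psi y| >= h: this contradicts h <= c |psi x - psi z| < h. *)

Section Psidist.
Context {R : realType} (f : R -> R).

Lemma psidist_le (a b : R) : psidist f a b <= `|a - b| + `|f a - f b|.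
Proof.
rewrite /psidist; move: (a - b) (f a - f b) => p q.
rewrite -(@ger0_norm _ (`|p| + `|q|)) ?addr_ge0 // -sqrtr_sqr.
rewrite ler_sqrt ?addr_ge0 ?sqr_ge0 // sqrrD !real_normK ?num_real //.
by rewrite lerD2r lerDl mulrn_wge0 // mulr_ge0.
Qed.

Lemma dist_le_psidist (a b : R) : `|a - b| <= psidist f a b.
Proof.
rewrite /psidist -sqrtr_sqr ler_sqrt ?addr_ge0 ?sqr_ge0 //.
by rewrite lerDl sqr_ge0.
Qed.

Lemma distf_le_psidist (a b : R) : `|f a - f b| <= psidist f a b.
Proof.
rewrite /psidist -sqrtr_sqr ler_sqrt ?addr_ge0 ?sqr_ge0 //.
by rewrite lerDr sqr_ge0.
Qed.

Lemma psidist_eq_dist (a b : R) : f a = f b -> psidist f a b = `|a - b|.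
Proof.
move=> fab; apply/eqP; rewrite eq_le dist_le_psidist andbT.
by have := psidist_le a b; rewrite fab subrr normr0 addr0.
Qed.

End Psidist.

Lemma steep_same_sign {R : realFieldType} {M u v a b B : R} :
  0 < M -> 0 < u -> 0 < v -> u + v <= B -> `|a - b| <= B ->
  (4 * M + 4) * B < u + `|a| ->
  (M * u < a /\ M * v < b) \/ (M * u < - a /\ M * v < - b).
Proof.
move=> M0 u0 v0 uvB abB aB.
have uvMB : (4 * M + 4) * (u + v) <= (4 * M + 4) * B by rewrite ler_wpM2l //; lra.
have abMB : (4 * M + 4) * `|a - b| <= (4 * M + 4) * B by rewrite ler_wpM2l //; lra.
case: (ltrgt0P a) => a0.
- left; rewrite gtr0_norm // in aB; have := ler_norm (a - b); nra.
- right; rewrite ltr0_norm // in aB; have := ler_norm (b - a); rewrite distrC; nra.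
- rewrite a0 normr0 in aB; nra.
Qed.

Lemma ereal_sup_unbounded (R : realType) (S : set \bar R) :
  (forall M : R, exists2 e, S e & (M%:E < e)%E) -> ereal_sup S = +oo%E.
Proof.
move=> SM; case E: (ereal_sup S) => [r| |] //.
- have [e Se] := SM r; have := ereal_sup_ubound Se; rewrite E => eler rlte.
  by have := lt_le_trans rlte eler; rewrite ltxx.
- have [e Se] := SM 0; have := ereal_sup_ubound Se; rewrite E => eleN.
  by move=> /lt_le_trans/(_ eleN); rewrite ltNge leNye.
Qed.

Lemma ereal_inf_unbounded (R : realType) (S : set \bar R) :
  (forall M : R, exists2 e, S e & (e < M%:E)%E) -> ereal_inf S = -oo%E.
Proof.
move=> SM; rewrite /ereal_inf ereal_sup_unbounded // => M.
have [e Se eM] := SM (- M); exists (- e)%E; first by exists e.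
by rewrite lteNr.
Qed.

Lemma inf_sup_unbounded (R : realType) (J : R -> set R) (g : R -> R) :
  (forall d, 0 < d -> forall N, exists2 t, J d t & N < g t) ->
  ereal_inf [set ereal_sup [set (g t)%:E | t in J d] | d in [set d : R | 0 < d]]
  = +oo%E.
Proof.
move=> Jg; apply/ereal_inf_pinfty => _ [d d0 <-]; apply: ereal_sup_unbounded => N.
by have [t Jt Ngt] := Jg d d0 N; exists (g t)%:E; [exists t | rewrite lte_fin].
Qed.

Lemma sup_inf_unbounded (R : realType) (J : R -> set R) (g : R -> R) :
  (forall d, 0 < d -> forall N, exists2 t, J d t & g t < N) ->
  ereal_sup [set ereal_inf [set (g t)%:E | t in J d] | d in [set d : R | 0 < d]]
  = -oo%E.
Proof.
move=> Jg; apply/ereal_sup_ninfty => _ [d d0 <-]; apply: ereal_inf_unbounded => N.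
by have [t Jt gtN] := Jg d d0 N; exists (g t)%:E; [exists t | rewrite lte_fin].
Qed.

Lemma cvg_at_right0_gt {R : realType} {F : R -> \bar R} {l a : R} :
  F x @[x --> 0^'+] --> l%:E -> a < l ->
  exists2 e : R, 0 < e & forall d, 0 < d -> d < e -> (a%:E < F d)%E.
Proof.
move=> /fine_cvgP[Ffin Fl] al.
pose P d := F d \is a fin_num /\ a < fine (F d).
have : \forall d \near 0^'+, P d.
  by near=> d; split; near: d; [exact: Ffin | exact: cvgr_gt Fl _ al].
rewrite near_withinE => /nbhs_ballP[e e0 Fe]; exists e => // d d0 de.
have [|//|Fd aF] := Fe d; first by rewrite /ball /= sub0r normrN gtr0_norm.
by rewrite -(fineK Fd) lte_fin.
Unshelve. all: by end_near.
Qed.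

Lemma continuous_within_ball {R : realType} {I : set R} {f : R -> R} {y : R} :
  {within I, continuous f} -> I y -> forall eta, 0 < eta ->
  exists2 r : R, 0 < r & forall x, I x -> `|x - y| < r -> `|f x - f y| < eta.
Proof.
move=> cf Iy eta eta0; pose P x := `|f y - f x| < eta.
have : \forall x \near within I (nbhs y), P x.
  move/cvgrPdist_lt/(_ _ eta0) : (cf y).
  by rewrite /prop_near1 /nbhs /= -nbhs_subspace_in.
rewrite near_withinE => /nbhs_ballP[r r0 fr]; exists r => // x Ix xr.
by rewrite distrC; apply: fr => //; rewrite /ball /= distrC.
Qed.

Lemma lebesgue_measure_le {R : realType} {A B : set R} : A `<=` B ->
  (lebesgue_measure A <= lebesgue_measure B)%E.
Proof.
move=> AB; rewrite /lebesgue_measure /lebesgue_stieltjes_measure.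
by rewrite /measure_extension; apply: le_mu_ext.
Qed.

Lemma density_gt_half_far {R : realType} {S : set R} {y d : R} : 0 < d ->
  S `<=` [set s | y < s] ->
  ((1 / 2)%:E < (d^-1)%:E * lebesgue_measure S)%E ->
  exists2 s, S s & y + d / 2 < s.
Proof.
move=> d0 Sy dense; apply: contrapT => noFar.
have Sy2 : S `<=` [set` `]y, y + d / 2]].
  move=> s Ss; rewrite /= in_itv /= Sy //=; rewrite leNgt; apply/negP => ys.
  by apply: noFar; exists s.
have := lebesgue_measure_le Sy2; rewrite lebesgue_measure_itv /= lte_fin ltrDl.
rewrite ifT; last by apply/idP; lra.
rewrite -EFinD addrAC subrr add0r => Sle.
have : ((d^-1)%:E * lebesgue_measure S <= (d^-1)%:E * (d / 2)%:E)%E.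
  by apply: lee_wpmul2l => //; rewrite lee_fin invr_ge0 ltW.
rewrite -EFinM mulrA mulVf ?gt_eqF // mul1r => Sle2.
by have := lt_le_trans dense Sle2; rewrite mul1r ltxx.
Qed.

Lemma IVT_gt {R : realType} {I : set R} {f : R -> R} {a b : R} (v : R) :
  is_interval I -> {within I, continuous f} -> I a -> I b -> a <= b ->
  f a < v <= f b -> exists z, [/\ I z, a < z <= b & f z = v].
Proof.
move=> iI cf Ia Ib ab /andP[fav vfb].
have Iab : `[a, b] `<=` I by move=> w; rewrite /= in_itv /=; exact: iI.
have [|z zab fz] := @IVT R f a b v ab (continuous_subspaceW Iab cf).
  by rewrite ge_min le_max; apply/andP; split; apply/orP; [left|right]; lra.
move: (zab); rewrite in_itv /= => /andP[az zb].
exists z; split => //; first exact: Iab.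
rewrite zb andbT lt_neqAle az andbT; apply/eqP => aEz.
by move: fz; rewrite -aEz => faE; lra.
Qed.

Section DiniAtPoint.
Context {R : realType} (I : set R) (f : R -> R) (y : R).

(* s = 1: f rises steeply on both sides of y; s = -1: it falls steeply. *)
Definition cusp (s d M : R) := exists x z, [/\ I x, I z, y - d < x < y,
  y < z < y + d & s * dq f y x < - M /\ M < s * dq f y z].

Lemma dq_left_lt (s M x : R) : x < y ->
  M * (y - x) < s * (f x - f y) -> s * dq f y x < - M.
Proof. by move=> xy; rewrite /dq mulrA ltr_ndivrMr ?subr_lt0 //; lra. Qed.

Lemma dq_right_gt (s M z : R) : y < z ->
  M * (z - y) < s * (f z - f y) -> M < s * dq f y z.
Proof. by move=> yz; rewrite /dq mulrA ltr_pdivlMr ?subr_gt0 //; lra. Qed.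

Lemma cusp_mono {s d M d' M' : R} :
  cusp s d M -> d <= d' -> M' <= M -> cusp s d' M'.
Proof.
move=> [x [z [Ix Iz /andP[dx xy] /andP[yz zd] [lx rz]]]] dd' MM'.
exists x, z; split => //; first (by apply/andP; split; lra).
  by apply/andP; split; lra.
by split; lra.
Qed.

Lemma not_Mpoint_cusp : ~ Mpoint I f y ->
  forall d M, 0 < d -> 0 < M -> cusp 1 d M \/ cusp (-1) d M.
Proof.
move=> nM d M d0 M0; apply: contrapT => noCusp; apply: nM.
exists (4 * M + 4), d; split; first lra; split => //.
move=> x z Ix /andP[dx xy] Iz /andP[yz zd]; rewrite leNgt; apply/negP => far.
have [yx0 zy0] : 0 < y - x /\ 0 < z - y by split; lra.
have xz_le : (y - x) + (z - y) <= psidist f x z.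
  by have := dist_le_psidist f x z; rewrite ltr0_norm ?subr_lt0 //; lra.
have fxz_le : `|(f x - f y) - (f z - f y)| <= psidist f x z.
  by rewrite opprB addrA subrK; exact: distf_le_psidist.
have xy_le : psidist f x y <= (y - x) + `|f x - f y|.
  by have := psidist_le f x y; rewrite ltr0_norm ?subr_lt0 // opprB.
have [[lx rz]|[lx rz]] := steep_same_sign M0 yx0 zy0 xz_le fxz_le
  (lt_le_trans far xy_le); apply: noCusp; [left | right];
  exists x, z; split; rewrite ?dx ?xy ?yz ?zd //; split;
  [apply: dq_left_lt | apply: dq_right_gt | apply: dq_left_lt | apply: dq_right_gt];
  rewrite ?mul1r ?mulN1r //.
Qed.

Lemma not_Mpoint_cusp_everywhere : ~ Mpoint I f y ->
  (forall d M, 0 < d -> 0 < M -> cusp 1 d M) \/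
  (forall d M, 0 < d -> 0 < M -> cusp (-1) d M).
Proof.
move=> nM; have [|up] := pselect (forall d M, 0 < d -> 0 < M -> cusp 1 d M).
  by left.
right; have [d1 [M1 [d10 [M10 noUp]]]] :
    exists d1 M1, [/\ 0 < d1, 0 < M1 & ~ cusp 1 d1 M1].
  apply: contrapT => allUp; apply: up => d M d0 M0.
  by apply: contrapT => nUp; apply: allUp; exists d, M.
move=> d M d0 M0.
have dm : 0 < Num.min d d1 by rewrite lt_min d0 d10.
have Mm : 0 < Num.max M M1 by rewrite lt_max M0.
have [upm|downm] := not_Mpoint_cusp nM _ _ dm Mm.
  by exfalso; apply: noUp; apply: cusp_mono upm _ _;
    rewrite ?ge_min ?le_max lexx ?orbT.
by apply: cusp_mono downm _ _; rewrite ?ge_min ?le_max lexx.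
Qed.

Lemma cusp_right_unbounded {s : R} :
  (forall d M, 0 < d -> 0 < M -> cusp s d M) ->
  forall d, 0 < d -> forall N, exists2 z, rnbh I y d z & N < s * dq f y z.
Proof.
move=> cs d d0 N; have M0 : 0 < `|N| + 1 by have := normr_ge0 N; lra.
have [x [z [_ Iz _ yz [_ rz]]]] := cs d _ d0 M0.
by exists z; [split | have := ler_norm N; lra].
Qed.

Lemma cusp_left_unbounded {s : R} :
  (forall d M, 0 < d -> 0 < M -> cusp s d M) ->
  forall d, 0 < d -> forall N, exists2 x, lnbh I y d x & s * dq f y x < N.
Proof.
move=> cs d d0 N; have M0 : 0 < `|N| + 1 by have := normr_ge0 N; lra.
have [x [z [Ix _ xy _ [lx _]]]] := cs d _ d0 M0.
by exists x; [split | have := ler_norm (- N); rewrite normrN; lra].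
Qed.

Lemma not_Mpoint_dini_infinite : ~ Mpoint I f y ->
  (dini_upper_right I f y = +oo%E /\ dini_lower_left I f y = -oo%E) \/
  (dini_upper_left I f y = +oo%E /\ dini_lower_right I f y = -oo%E).
Proof.
move=> /not_Mpoint_cusp_everywhere[] cs; [left | right]; split;
  rewrite /dini_upper_right /dini_lower_left /dini_upper_left /dini_lower_right.
- apply: inf_sup_unbounded => d d0 N.
  by have [z] := cusp_right_unbounded cs _ d0 N; rewrite mul1r; exists z.
- apply: sup_inf_unbounded => d d0 N.
  by have [x] := cusp_left_unbounded cs _ d0 N; rewrite mul1r; exists x.
- apply: inf_sup_unbounded => d d0 N.
  by have [x] := cusp_left_unbounded cs _ d0 (- N); rewrite mulN1r ltrN2; exists x.
- apply: sup_inf_unbounded => d d0 N.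
  by have [z] := cusp_right_unbounded cs _ d0 (- N); rewrite mulN1r ltrN2; exists z.
Qed.

Lemma dini_lower_left_ninfty_near : dini_lower_left I f y = -oo%E ->
  forall N d, 0 < d -> exists2 x, lnbh I y d x & dq f y x < N.
Proof.
move=> /ereal_sup_ninfty left_ninfty N d d0.
have /(lb_ereal_infNy_adherent N)[_ [x dx <-]] :
    ereal_inf [set (dq f y x)%:E | x in lnbh I y d] = -oo%E.
  by apply: left_ninfty; exists d.
by rewrite lte_fin; exists x.
Qed.

Hypotheses (iI : is_interval I) (cf : {within I, continuous f}) (Iy : I y).

Lemma level_reached_right {t d0 : R} : 0 < t ->
  (forall d, 0 < d -> d < d0 -> ((1 / 2)%:E < (d^-1)%:E *
     lebesgue_measure [set s | rnbh I y d s /\ (t <= dq f y s)%R])%E) ->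
  forall h, 0 < h -> 2 * h < t * d0 ->
  exists z, [/\ I z, y < z < y + 2 * h / t & f z = f y + h].
Proof.
move=> t0 dense h h0 htd0; pose d := 2 * h / t.
have d_gt0 : 0 < d by rewrite divr_gt0 ?mulr_gt0.
have td : t * d = 2 * h by rewrite mulrC divfK ?gt_eqF.
have dd0 : d < d0 by rewrite -(ltr_pM2l t0) td.
have Sy : [set s | rnbh I y d s /\ t <= dq f y s] `<=` [set s | y < s].
  by move=> s [[_ /andP[ys _]] _].
have [s [[Is /andP[ys sd]] tdq] far] := density_gt_half_far d_gt0 Sy (dense d d_gt0 dd0).
move: tdq; rewrite /dq ler_pdivlMr ?subr_gt0 // => rise.
have fs : f y + h <= f s.
  have : t * (d / 2) <= t * (s - y) by rewrite ler_pM2l //; lra.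
  lra.
have [|z [Iz /andP[yz zs] fz]] := IVT_gt (f y + h) iI cf Iy Is (ltW ys).
  by rewrite fs andbT; lra.
by exists z; split => //; rewrite yz -/d /=; lra.
Qed.

Lemma steep_not_Mpoint : dini_lower_left I f y = -oo%E ->
  dini_lower_right_ap I f y = +oo%E -> ~ Mpoint I f y.
Proof.
move=> left_steep right_steep [c [eps [c1 [eps0 Mc]]]]; have c0 : 0 < c by lra.
have : ((4 * c)%:E < dini_lower_right_ap I f y)%E by rewrite right_steep ltry.
move=> /ereal_sup_gtP[_ [t tdense <-]]; rewrite lte_fin => ct.
have t0 : 0 < t by lra.
have half_lt1 : 1 / 2 < 1 :> R by lra.
have [d0 d00 dense] := cvg_at_right0_gt tdense half_lt1.
pose m := Num.min d0 eps.
have [m0 md0 meps] : [/\ 0 < m, m <= d0 & m <= eps].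
  by split; rewrite ?lt_min ?d00 ?eps0 ?ge_min ?lexx ?orbT.
have eta0 : 0 < t * m / 2 by rewrite divr_gt0 ?mulr_gt0.
have [r r0 fr] := continuous_within_ball cf Iy _ eta0.
pose q := Num.min r eps.
have [q0 qr qeps] : [/\ 0 < q, q <= r & q <= eps].
  by split; rewrite ?lt_min ?r0 ?eps0 ?ge_min ?lexx ?orbT.
have [x [Ix /andP[qx xy]]] := dini_lower_left_ninfty_near left_steep (- (2 * c)) _ q0.
rewrite /dq ltr_ndivrMr ?subr_lt0 // => steep_x; pose h := f x - f y.
have hx : 2 * c * (y - x) < h by rewrite /h; lra.
have h0 : 0 < h by apply: lt_trans hx; rewrite !mulr_gt0 // subr_gt0.
have h_small : h < t * m / 2.
  by rewrite -[h]gtr0_norm //; apply: fr; rewrite // ltr0_norm ?subr_lt0 //; lra.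
have htd0 : 2 * h < t * d0.
  have : t * m <= t * d0 by rewrite ler_pM2l.
  lra.
have [z [Iz /andP[yz zh] fz]] := level_reached_right t0 dense _ h0 htd0.
have hdt : c * (2 * h / t) < h / 2 by rewrite mulrA ltr_pdivrMr //; nra.
have hdm : 2 * h / t < m by rewrite ltr_pdivrMr //; lra.
have xeps : y - eps < x < y by rewrite xy andbT; lra.
have zeps : y < z < y + eps by rewrite yz /=; lra.
have fxz : f x = f z by rewrite fz /h addrC subrK.
have := Mc x z Ix xeps Iz zeps.
rewrite (psidist_eq_dist f x z fxz) distrC gtr0_norm ?subr_gt0; last lra.
have := distf_le_psidist f x y; rewrite gtr0_norm // -/h => hxy xz.
have : c * (z - y) < c * (2 * h / t) by rewrite ltr_pM2l //; lra.
lra.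
Qed.

End DiniAtPoint.

Theorem lemma3p1 (R : realType) (I : set R) (f : R -> R) (y : R) :
  is_interval I -> (exists a b : R, a < b /\ I a /\ I b) ->
  {within I, continuous f} -> I y ->
  (~ Mpoint I f y ->
     (dini_upper_right I f y = +oo%E /\ dini_lower_left I f y = -oo%E) \/
     (dini_upper_left I f y = +oo%E /\ dini_lower_right I f y = -oo%E)) /\
  (dini_lower_left I f y = -oo%E -> dini_lower_right_ap I f y = +oo%E ->
     ~ Mpoint I f y).
Proof.
move=> iI _ cf Iy; split; first exact: not_Mpoint_dini_infinite.
exact: steep_not_Mpoint.
Qed.
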